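(* For every $j\in\mathbb{N}$, every $n\in\mathbb{N}$ and every $M\in\mathbb{R}^{n\times n}$, $$\|\mathcal{U}(M)\|_{S_{2^j}}\le 2^{j-1}\|M\|_{S_{2^j}}.$$
   Context: For $M\in\mathbb{R}^{n\times n}$ with singular values $\sigma_1(M)\ge\dots\ge\sigma_n(M)$, the Schatten norm is $\|M\|_{S_p}:=(\sum_{m=1}^n\sigma_m(M)^p)^{1/p}$ for $1\le p<\infty$ and $\|M\|_{S_\infty}:=\sigma_1(M)$ (spectral norm). The upper triangular truncation is $\mathcal{U}(M)_{ij}:=M_{ij}$ if $i\le j$ and $0$ if $i>j$. *)

From HB Require Import structures.
From mathcomp Require Import all_boot all_order all_algebra.
From mathcomp Require Import all_classical all_reals all_analysis.
Set Implicit Arguments. Unset Strict Implicit. Unset Printing Implicit Defensive.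
Import Order.TTheory GRing.Theory Num.Theory.
Local Open Scope ring_scope.
Local Open Scope classical_set_scope.

Definition is_singvals (R : realType) (n : nat) (M : 'M[R]_n) (s : 'rV[R]_n) : Prop :=
  (forall i : 'I_n, 0 <= s 0 i) /\
  (forall i j : 'I_n, (i <= j)%N -> s 0 j <= s 0 i) /\
  exists U V : 'M[R]_n,
    U *m U^T = 1%:M /\ V *m V^T = 1%:M /\ M = U *m diag_mx s *m V^T.

(* The singular values sigma_1(M) >= ... >= sigma_n(M) (they exist and are unique). *)
Definition singvals (R : realType) (n : nat) (M : 'M[R]_n) : 'rV[R]_n :=
  xget 0 [set s | is_singvals M s].

Definition schatten (R : realType) (n : nat) (p : R) (M : 'M[R]_n) : R :=
  powR (\sum_(m < n) powR (singvals M 0 m) p) p^-1.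

Definition utrunc (R : realType) (n : nat) (M : 'M[R]_n) : 'M[R]_n :=
  \matrix_(i < n, j < n) (if (i <= j)%N then M i j else 0).

(* We work with the trace expression ||X||_(2^(L+1)) = tr((X^T X)^(2^L))^(1/2^(L+1))
   and prove three facts about it by induction on L, using only traces:
   - a Cauchy-Schwarz inequality for traces of 2^L-th powers, which gives the
     Hoelder inequality ||X Y||_p <= ||X||_(2p) ||Y||_(2p);
   - the triangle inequality, from ||X||_(2p)^2 = ||X^T X||_p;
   - the truncation bound: for X = band b A (entries on and above the b-th
     superdiagonal), X^T X = band 0 (X^T A) + (band 1 (X^T A))^T, so
     ||X||_(2p)^2 <= 2 * 2^L ||X^T A||_p <= 2^(L+1) ||X||_(2p) ||A||_(2p).
   To identify this expression with the Schatten norm of the statement (defined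
   through singular values), we prove that every real square matrix has a
   singular value decomposition: the largest singular value maximizes a
   quadratic form on the unit sphere, and Householder reflections split it off. *)

From mathcomp Require Import all_boot all_order all_algebra.
From mathcomp Require Import all_classical all_reals all_analysis.
From mathcomp Require Import ring lra.
Import Order.TTheory GRing.Theory Num.Theory.
Import numFieldNormedType.Exports.
Local Open Scope ring_scope.
Set Implicit Arguments. Unset Strict Implicit. Unset Printing Implicit Defensive.

Lemma discriminant_le (R : realFieldType) (a b c : R) : 0 <= a ->
  (forall t, 0 <= a * t ^+ 2 - 2 * b * t + c) -> b ^+ 2 <= a * c.
Proof.
move=> a_ge0 nonneg; have [a0|a_neq0] := eqVneq a 0.
  rewrite a0 mul0r; have [->|b_neq0] := eqVneq b 0; first by rewrite expr0n.
  have := nonneg ((c + 1) / (2 * b)); rewrite a0 mul0r.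
  have -> : 2 * b * ((c + 1) / (2 * b)) = c + 1.
    by field; rewrite ?mulf_neq0 // ?pnatr_eq0.
  lra.
have a_gt0 : 0 < a by rewrite lt_def a_neq0.
have := nonneg (b / a).
have -> : a * (b / a) ^+ 2 - 2 * b * (b / a) + c = c - b ^+ 2 / a by field.
by rewrite subr_ge0 ler_pdivrMr // mulrC.
Qed.

Section GramTrace.
Variables (R : realFieldType) (n : nat).
Implicit Types (A B P Q X Y : 'M[R]_n).

Lemma trmxX A k : (A ^+ k)^T = A^T ^+ k.
Proof.
elim: k => [|k IHk]; first by rewrite !expr0 trmx1.
by rewrite exprS -mulmxE trmx_mul IHk mulmxE -exprSr.
Qed.

Lemma mxtrace_swapX A B k : \tr ((A * B) ^+ k) = \tr ((B * A) ^+ k).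
Proof.
case: k => [|k]; first by rewrite !expr0.
have -> : (A * B) ^+ k.+1 = A * ((B * A) ^+ k * B).
  by elim: k => [|k IHk]; rewrite ?expr1 ?expr0 ?mul1r // exprS IHk exprS !mulrA.
by rewrite -!mulmxE mxtrace_mulC !mulmxE -mulrA -exprSr.
Qed.

Lemma mxtrace_gram X : \tr (X^T * X) = \sum_i \sum_j X j i ^+ 2.
Proof.
apply: eq_bigr => i _; rewrite -mulmxE mxE.
by apply: eq_bigr => j _; rewrite mxE expr2.
Qed.

Lemma mxtrace_gram_ge0 X : 0 <= \tr (X^T * X).
Proof. by rewrite mxtrace_gram; do 2 apply: sumr_ge0 => ? _; apply: sqr_ge0. Qed.

Lemma mxtrace_CauchySchwarz P Q : \tr (P * Q) ^+ 2 <= \tr (P^T * P) * \tr (Q^T * Q).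
Proof.
apply: discriminant_le; first exact: mxtrace_gram_ge0.
move=> t; have := mxtrace_gram_ge0 (t *: P - Q^T).
rewrite raddfB /= linearZ /= trmxK -!mulmxE mulmxBl !mulmxBr.
rewrite -!scalemxAl -!scalemxAr !scalerA !raddfB /= !mxtraceZ -trmx_mul mxtrace_tr.
rewrite (mxtrace_mulC Q P) (mxtrace_mulC Q Q^T) => ge0.
by apply: le_trans ge0 _; rewrite le_eqVlt; apply/orP; left; apply/eqP; ring.
Qed.

(* gram_trace L X = tr((X^T X)^(2^L)) = sum_i sigma_i(X)^(2^(L+1)). *)
Definition gram_trace (L : nat) X := \tr ((X^T * X) ^+ (2 ^ L)).

Lemma gram_traceS L X :
  gram_trace L.+1 X = \tr (((X^T * X) ^+ (2 ^ L))^T * (X^T * X) ^+ (2 ^ L)).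
Proof. by rewrite /gram_trace trmxX trmx_mul trmxK -exprD addnn -mul2n -expnS. Qed.

Lemma gram_trace_ge0 L X : 0 <= gram_trace L X.
Proof.
case: L => [|L]; last by rewrite gram_traceS mxtrace_gram_ge0.
by rewrite /gram_trace expr1 mxtrace_gram_ge0.
Qed.

Lemma gram_trace_tr L X : gram_trace L X^T = gram_trace L X.
Proof. by rewrite /gram_trace trmxK mxtrace_swapX. Qed.

Lemma gram_trace_sym L P : P^T = P -> gram_trace L P = \tr (P ^+ (2 ^ L.+1)).
Proof. by move=> sP; rewrite /gram_trace sP -expr2 -exprM -expnS. Qed.

Lemma gram_trace_gram L X : gram_trace L (X^T * X) = gram_trace L.+1 X.
Proof. by rewrite gram_trace_sym // -mulmxE trmx_mul trmxK. Qed.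

Lemma gram_trace_mul_of L :
  (forall P Q, \tr ((P * Q) ^+ (2 ^ L)) ^+ 2 <= gram_trace L P * gram_trace L Q) ->
  forall X Y, gram_trace L (X * Y) ^+ 2 <= gram_trace L.+1 X * gram_trace L.+1 Y.
Proof.
move=> CS_L X Y.
have -> : gram_trace L (X * Y) = \tr ((X^T * X * (Y * Y^T)) ^+ (2 ^ L)).
  rewrite /gram_trace -mulmxE trmx_mul !mulmxE -mulrA mxtrace_swapX.
  by rewrite !mulrA.
apply: le_trans (CS_L _ _) _.
by rewrite gram_trace_gram -{1}[Y]trmxK gram_trace_gram gram_trace_tr.
Qed.

Lemma mxtrace_powerCS L P Q :
  \tr ((P * Q) ^+ (2 ^ L)) ^+ 2 <= gram_trace L P * gram_trace L Q.
Proof.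
elim: L P Q => [|L IHL] P Q; first by rewrite /gram_trace !expr1; apply: mxtrace_CauchySchwarz.
rewrite expnS exprM expr2; apply: le_trans (IHL _ _) _.
by rewrite -expr2; apply: gram_trace_mul_of.
Qed.

Lemma gram_trace_mul L X Y :
  gram_trace L (X * Y) ^+ 2 <= gram_trace L.+1 X * gram_trace L.+1 Y.
Proof. exact/gram_trace_mul_of/mxtrace_powerCS. Qed.

End GramTrace.

Definition iroot (R : rcfType) (k : nat) (x : R) : R := iter k Num.sqrt x.

Section IteratedRoot.
Variable R : rcfType.
Implicit Types x y : R.

Lemma iroot_ge0 k x : 0 <= x -> 0 <= iroot k x.
Proof. by case: k => [//|k] _; rewrite /iroot iterS sqrtr_ge0. Qed.

Lemma iroot_le k x y : x <= y -> iroot k x <= iroot k y.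
Proof. by elim: k => [//|k IHk] le_xy; rewrite /iroot !iterS ler_wsqrtr ?IHk. Qed.

Lemma irootM k x y : 0 <= x -> 0 <= y -> iroot k (x * y) = iroot k x * iroot k y.
Proof.
elim: k => [//|k IHk] x_ge0 y_ge0.
by rewrite /iroot !iterS -/(iroot k _) IHk // sqrtrM // iroot_ge0.
Qed.

Lemma irootSr k x : iroot k.+1 x = iroot k (Num.sqrt x).
Proof. by rewrite /iroot iterSr. Qed.

Lemma irootS k x : iroot k.+1 x = Num.sqrt (iroot k x).
Proof. by rewrite /iroot iterS. Qed.

Lemma iroot_sqr k x : 0 <= x -> iroot k.+1 (x ^+ 2) = iroot k x.
Proof. by move=> x_ge0; rewrite irootSr sqrtr_sqr ger0_norm. Qed.

End IteratedRoot.

Section SchattenTrace.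
Variables (R : rcfType) (n : nat).
Implicit Types (A B X Y : 'M[R]_n).

(* The Schatten 2^(L+1)-norm, written as (tr((X^T X)^(2^L)))^(1/2^(L+1)). *)
Definition schatten_tr (L : nat) X := iroot L.+1 (gram_trace L X).

Lemma schatten_tr_ge0 L X : 0 <= schatten_tr L X.
Proof. exact/iroot_ge0/gram_trace_ge0. Qed.

Lemma schatten_tr_tr L X : schatten_tr L X^T = schatten_tr L X.
Proof. by rewrite /schatten_tr gram_trace_tr. Qed.

Lemma schatten_tr_gram L X : schatten_tr L (X^T * X) = schatten_tr L.+1 X ^+ 2.
Proof.
by rewrite /schatten_tr gram_trace_gram [iroot L.+2 _]irootS sqr_sqrtr ?iroot_ge0 ?gram_trace_ge0.
Qed.

Lemma schatten_tr_mul L X Y :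
  schatten_tr L (X * Y) <= schatten_tr L.+1 X * schatten_tr L.+1 Y.
Proof.
rewrite /schatten_tr -irootM ?gram_trace_ge0 //.
rewrite -iroot_sqr ?gram_trace_ge0 // irootSr [iroot L.+2 _]irootSr.
by apply/iroot_le/ler_wsqrtr/gram_trace_mul.
Qed.

Lemma frobenius_triangle A B :
  Num.sqrt (\tr ((A + B)^T * (A + B))) <=
  Num.sqrt (\tr (A^T * A)) + Num.sqrt (\tr (B^T * B)).
Proof.
rewrite -[leRHS]ger0_norm ?addr_ge0 ?sqrtr_ge0 // -sqrtr_sqr ler_wsqrtr //.
rewrite sqrrD !sqr_sqrtr ?mxtrace_gram_ge0 //.
rewrite raddfD /= -!mulmxE !mulmxDl !mulmxDr !mxtraceD !mulmxE.
have -> : \tr (B^T * A) = \tr (A^T * B).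
  by rewrite -mxtrace_tr -mulmxE trmx_mul trmxK mulmxE.
have : \tr (A^T * B) <= Num.sqrt (\tr (A^T * A)) * Num.sqrt (\tr (B^T * B)).
  rewrite -sqrtrM ?mxtrace_gram_ge0 // (le_trans (ler_norm _)) //.
  rewrite -sqrtr_sqr ler_wsqrtr //.
  by have := mxtrace_CauchySchwarz A^T B; rewrite trmxK -!mulmxE (mxtrace_mulC A A^T).
lra.
Qed.

(* Minkowski inequality, by induction on L using ||X||_(2p)^2 = ||X^T X||_p. *)
Lemma schatten_tr_triangle L A B :
  schatten_tr L (A + B) <= schatten_tr L A + schatten_tr L B.
Proof.
elim: L A B => [|L IHL] A B.
  by rewrite /schatten_tr /gram_trace /iroot /= !expr1 frobenius_triangle.
rewrite -(ler_pXn2r (n := 2)) ?nnegrE ?addr_ge0 ?schatten_tr_ge0 //.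
rewrite -schatten_tr_gram raddfD /= -!mulmxE !mulmxDl !mulmxDr !mulmxE.
apply: le_trans (IHL _ _) _; rewrite addrC.
apply: le_trans (lerD (IHL _ _) (IHL _ _)) _.
have := schatten_tr_mul L A^T B; have := schatten_tr_mul L B^T A.
rewrite !schatten_tr_gram !schatten_tr_tr sqrrD; lra.
Qed.

End SchattenTrace.

Section BandTruncation.
Variables (R : rcfType) (n : nat).
Implicit Types (A X : 'M[R]_n).

Definition band (b : nat) A : 'M[R]_n :=
  \matrix_(i < n, j < n) (if (i + b <= j)%N then A i j else 0).

Lemma band_gram b A :
  let X := band b A in X^T * X = band 0 (X^T * A) + (band 1 (X^T * A))^T.
Proof.
apply/matrixP => i k; rewrite -!mulmxE !mxE addn0 addn1.
have [le_ik|lt_ki] := leqP i k.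
  rewrite addr0; apply: eq_bigr => l _; rewrite !mxE.
  by case: (leqP (l + b) i) => [/leq_trans->//|]; rewrite !mul0r.
rewrite add0r; apply: eq_bigr => l _; rewrite !mxE.
case: (leqP (l + b) k) => [le_lk|]; last by rewrite mulr0 mul0r.
by rewrite (leq_trans le_lk (ltnW lt_ki)) mulrC.
Qed.

Lemma band_frobenius b A : \tr ((band b A)^T * band b A) <= \tr (A^T * A).
Proof.
rewrite !mxtrace_gram; apply: ler_sum => i _; apply: ler_sum => j _; rewrite mxE.
by case: ifP => _ //; rewrite expr0n sqr_ge0.
Qed.

(* ||band b A||_(2^(L+1)) <= 2^L ||A||_(2^(L+1)), by induction on L: the
   Gram identity, the triangle and Hoelder inequalities give
   ||X||^2 <= 2 * 2^L ||X|| ||A|| for X = band b A. *)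
Theorem band_schatten_tr L b A : schatten_tr L (band b A) <= 2 ^+ L * schatten_tr L A.
Proof.
elim: L b A => [|L IHL] b A.
  by rewrite expr0 mul1r /schatten_tr /gram_trace /iroot /= !expr1 ler_wsqrtr ?band_frobenius.
set X := band b A.
have key : schatten_tr L.+1 X ^+ 2 <= 2 ^+ L.+1 * schatten_tr L.+1 X * schatten_tr L.+1 A.
  rewrite -schatten_tr_gram band_gram.
  apply: le_trans (schatten_tr_triangle _ _ _) _; rewrite schatten_tr_tr.
  apply: le_trans (lerD (IHL _ _) (IHL _ _)) _.
  rewrite -mulr2n -mulrnAl -mulr_natl -exprS -mulrA ler_pM2l ?exprn_gt0 //.
  by have := schatten_tr_mul L X^T A; rewrite schatten_tr_tr.
have [X0|X_neq0] := eqVneq (schatten_tr L.+1 X) 0.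
  by rewrite X0 mulr_ge0 ?exprn_ge0 ?schatten_tr_ge0.
have X_gt0 : 0 < schatten_tr L.+1 X by rewrite lt_def X_neq0 schatten_tr_ge0.
by rewrite -(ler_pM2r X_gt0) -expr2 (le_trans key) // mulrAC.
Qed.

End BandTruncation.

Section DotProduct.
Variable R : realFieldType.

Definition dot m (u w : 'rV[R]_m) : R := (u *m w^T) 0 0.
Definition qform m (S : 'M[R]_m) (z : 'rV[R]_m) : R := dot (z *m S) z.

Lemma dotE m (u w : 'rV[R]_m) : dot u w = \sum_i u 0 i * w 0 i.
Proof. by rewrite /dot mxE; apply: eq_bigr => i _; rewrite mxE. Qed.

Lemma dotC m (u w : 'rV[R]_m) : dot u w = dot w u.
Proof. by rewrite !dotE; apply: eq_bigr => i _; rewrite mulrC. Qed.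

Lemma dotBl m (u v w : 'rV[R]_m) : dot (u - v) w = dot u w - dot v w.
Proof. by rewrite /dot mulmxBl !mxE. Qed.

Lemma dotDl m (u v w : 'rV[R]_m) : dot (u + v) w = dot u w + dot v w.
Proof. by rewrite /dot mulmxDl mxE. Qed.

Lemma dotZl m a (u w : 'rV[R]_m) : dot (a *: u) w = a * dot u w.
Proof. by rewrite /dot -scalemxAl mxE. Qed.

Lemma dotBr m (u v w : 'rV[R]_m) : dot w (u - v) = dot w u - dot w v.
Proof. by rewrite dotC dotBl !(dotC w). Qed.

Lemma dotDr m (u v w : 'rV[R]_m) : dot w (u + v) = dot w u + dot w v.
Proof. by rewrite dotC dotDl !(dotC w). Qed.

Lemma dotZr m a (u w : 'rV[R]_m) : dot w (a *: u) = a * dot w u.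
Proof. by rewrite dotC dotZl dotC. Qed.

Lemma dot_ge0 m (u : 'rV[R]_m) : 0 <= dot u u.
Proof. by rewrite dotE; apply: sumr_ge0 => i _; rewrite -expr2 sqr_ge0. Qed.

Lemma dot_eq0 m (u : 'rV[R]_m) : (dot u u == 0) = (u == 0).
Proof.
apply/idP/eqP => [|->]; last by rewrite /dot mul0mx mxE.
rewrite dotE psumr_eq0 => [/allP u0|i _]; last by rewrite -expr2 sqr_ge0.
apply/rowP => i; have := u0 i (mem_index_enum _).
by rewrite mxE mulf_eq0 orbb => /eqP.
Qed.

Lemma dot_mulmx m p (u : 'rV[R]_m) (A : 'M[R]_(m, p)) (w : 'rV[R]_p) :
  dot (u *m A) w = dot u (w *m A^T).
Proof. by rewrite /dot trmx_mul trmxK mulmxA. Qed.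

Lemma dot_orth m (A : 'M[R]_m) (u : 'rV[R]_m) :
  A *m A^T = 1%:M -> dot (u *m A) (u *m A) = dot u u.
Proof. by move=> A_orth; rewrite dot_mulmx -mulmxA A_orth mulmx1. Qed.

Lemma dot_delta m (k : 'I_m) : dot (delta_mx 0 k) (delta_mx 0 k) = 1.
Proof.
rewrite dotE (bigD1 k) //= big1 ?addr0 => [|j /negPf jk]; first by rewrite mxE !eqxx mulr1.
by rewrite mxE jk andbF mul0r.
Qed.

Lemma qform_gram m p (M : 'M[R]_(p, m)) z : qform (M^T *m M) z = dot (z *m M^T) (z *m M^T).
Proof. by rewrite /qform mulmxA dot_mulmx. Qed.

Definition e0 m : 'rV[R]_m.+1 := delta_mx 0 0.

Lemma dot_e0 m (u : 'rV[R]_m.+1) : dot (e0 m) u = u 0 0.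
Proof.
rewrite dotE (bigD1 0) //= big1 ?addr0 => [|i /negPf i0]; first by rewrite mxE eqxx mul1r.
by rewrite mxE i0 mul0r.
Qed.

(* The Householder reflection exchanging e0 and a unit vector w. *)
Definition householder m (w : 'rV[R]_m.+1) : 'M[R]_m.+1 :=
  let d := e0 m - w in
  if d == 0 then 1%:M else 1%:M - (2 / dot d d) *: (d^T *m d).

Lemma householder_sym m (w : 'rV[R]_m.+1) : (householder w)^T = householder w.
Proof.
rewrite /householder; case: ifP => _; first by rewrite trmx1.
by rewrite raddfB /= linearZ /= trmx1 trmx_mul trmxK.
Qed.

Lemma householder_orth m (w : 'rV[R]_m.+1) : householder w *m (householder w)^T = 1%:M.
Proof.
rewrite householder_sym /householder; case: ifP => [_|d_neq0]; first by rewrite mulmx1.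
set d := e0 m - w; set c := dot d d; set D := d^T *m d.
have c_neq0 : c != 0 by rewrite /c dot_eq0 d_neq0.
have DD : D *m D = c *: D.
  by rewrite /D mulmxA -(mulmxA d^T) [d *m d^T]mx11_scalar mul_mx_scalar -scalemxAl.
rewrite mulmxBl !mulmxBr mul1mx mulmx1 mul1mx -scalemxAl -scalemxAr DD !scalerA.
have -> : 2 / c * (2 / c) * c = 2 / c + 2 / c by field.
by rewrite scalerDl; apply/matrixP => i j; rewrite !mxE; ring.
Qed.

Lemma householder_e0 m (w : 'rV[R]_m.+1) : dot w w = 1 -> e0 m *m householder w = w.
Proof.
move=> w1; rewrite /householder; case: ifP => [/eqP|d_neq0].
  by move/eqP; rewrite subr_eq0 => /eqP <-; rewrite mulmx1.
set d := e0 m - w.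
have dd : dot d d = 2 * d 0 0.
  rewrite /d dotBl !dotBr w1 !dot_e0 (dotC w) dot_e0 !mxE eqxx /=; ring.
have d00 : d 0 0 != 0.
  by apply: contraFN d_neq0 => /eqP d0; rewrite -dot_eq0 dd d0 mulr0.
rewrite mulmxBr mulmx1 -scalemxAr mulmxA [e0 m *m d^T]mx11_scalar -/(dot _ _) dot_e0.
rewrite mul_scalar_mx scalerA dd.
have -> : 2 / (2 * d 0 0) * d 0 0 = 1 by field; rewrite d00.
by rewrite scale1r /d opprB addrC subrK.
Qed.

Lemma householder_deflation m (M : 'M[R]_m.+1) (u v : 'rV[R]_m.+1) sigma :
  dot v v = 1 -> sigma != 0 -> v *m M^T = sigma *: u -> u *m M = sigma *: v ->
  e0 m *m (householder u *m M *m householder v) = sigma *: e0 m /\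
  (householder u *m M *m householder v) *m (e0 m)^T = sigma *: (e0 m)^T.
Proof.
move=> v1 sigma_neq0 vMt uM.
have u1 : dot u u = 1.
  have : dot (sigma *: u) (sigma *: u) = sigma * (sigma * dot v v).
    by rewrite -vMt dot_mulmx trmxK vMt -scalemxAl uM !dotZr.
  by rewrite dotZl dotZr v1 => /(mulfI sigma_neq0)/(mulfI sigma_neq0).
have vP := householder_e0 v1; have uQ := householder_e0 u1.
have P_orth := householder_orth v; have Q_orth := householder_orth u.
split.
  rewrite !mulmxA uQ uM -scalemxAl -{1}vP -mulmxA -{2}(householder_sym v).
  by rewrite P_orth mulmx1.
rewrite -(mulmxA _ (householder v)) -{1}(householder_sym v) -trmx_mul vP.
rewrite -mulmxA -{1}[M]trmxK -trmx_mul vMt linearZ /= -scalemxAr -{2}uQ.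
by rewrite trmx_mul mulmxA Q_orth mul1mx.
Qed.

End DotProduct.
Arguments e0 {R} m.

Section Variational.
Variables (R : rcfType) (m : nat) (S : 'M[R]_m) (v : 'rV[R]_m).

Hypothesis v_max : forall z, dot z z = 1 -> qform S z <= qform S v.

(* By homogeneity, the maximum bounds the form on the whole space. *)
Lemma qform_le_max z : qform S z <= qform S v * dot z z.
Proof.
have [->|z_neq0] := eqVneq z 0; first by rewrite /qform mul0mx /dot mul0mx !mxE mulr0.
set c := dot z z; have c_gt0 : 0 < c by rewrite lt_def dot_eq0 z_neq0 dot_ge0.
have sqrt_c : Num.sqrt c ^+ 2 = c by rewrite sqr_sqrtr // ltW.
set y := (Num.sqrt c)^-1 *: z.
have y1 : dot y y = 1.
  by rewrite /y dotZl dotZr mulrA -expr2 exprVn sqrt_c mulVf // gt_eqF.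
have := v_max y1; rewrite /qform /y -scalemxAl dotZl dotZr mulrA -expr2 exprVn sqrt_c.
by rewrite -/(qform S z) ler_pdivrMl // mulrC.
Qed.

Lemma max_eigenvector : S^T = S -> dot v v = 1 -> v *m S = qform S v *: v.
Proof.
move=> S_sym v1; set l := qform S v; set g := v *m S - l *: v.
have S_self a b : dot (a *m S) b = dot a (b *m S) by rewrite dot_mulmx S_sym.
have vg : dot v g = 0 by rewrite /g dotBr dotZr v1 mulr1 -S_self subrr.
have vSg : dot (v *m S) g = dot g g by rewrite [in RHS]/g dotBl dotZl vg mulr0 subr0.
suff : dot g g = 0 by move/eqP; rewrite dot_eq0 subr_eq0 => /eqP.
clearbody g.
(* l |v + t g|^2 - q(v + t g) = (l |g|^2 - q(g)) t^2 - 2 |g|^2 t is nonnegative. *)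
have : dot g g ^+ 2 <= (l * dot g g - qform S g) * 0.
  apply: discriminant_le => [|t]; first by rewrite subr_ge0 qform_le_max.
  have := qform_le_max (v + t *: g).
  rewrite /qform mulmxDl -scalemxAl !dotDl !dotDr !dotZl !dotZr -/(qform S v) -/l v1.
  rewrite vg (dotC g v) vg -/(qform S g) (S_self g v) (dotC g (v *m S)) vSg.
  rewrite -subr_ge0 => /le_trans; apply; rewrite le_eqVlt; apply/orP; left; apply/eqP; ring.
by rewrite mulr0 => le0; apply/eqP; rewrite -(sqrf_eq0 (dot g g)) eq_le le0 sqr_ge0.
Qed.

End Variational.

Section SingularValueDecomposition.
Variable R : realType.
Local Open Scope classical_set_scope.

(* Quadratic forms are continuous, being finite sums of products of coordinates. *)
Lemma continuous_sum (T : topologicalType) (I : Type) (r : seq I) (f : I -> T -> R) :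
  (forall i, continuous (f i)) -> continuous (fun x => \sum_(i <- r) f i x).
Proof.
move=> f_cont; elim: r => [|a r IHr].
  by under eq_fun do rewrite big_nil; exact: cst_continuous.
by under eq_fun do rewrite big_cons; move=> x; apply: continuousD; [exact: f_cont|exact: IHr].
Qed.

Lemma qform_continuous m (S : 'M[R]_m) : continuous (qform S).
Proof.
have qformE w : qform S w = \sum_k \sum_i w 0 i * S i k * w 0 k.
  by rewrite /qform dotE; apply: eq_bigr => k _; rewrite mxE mulr_suml.
rewrite (funext qformE).
apply: continuous_sum => k; apply: continuous_sum => i x.
apply: (@continuousM _ _ (fun w : 'rV[R]_m => w 0 i * S i k) (fun w => w 0 k));
  last exact: coord_continuous.
apply: (@continuousM _ _ (fun w : 'rV[R]_m => w 0 i) (fun=> S i k)); first exact: coord_continuous.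
exact: cst_continuous.
Qed.

(* By compactness of the unit sphere, a quadratic form attains its maximum there. *)
Lemma qform_max_exists m (S : 'M[R]_m.+1) :
  exists v, dot v v = 1 /\ forall z, dot z z = 1 -> qform S z <= qform S v.
Proof.
have qform1 (w : 'rV[R]_m.+1) : qform 1%:M w = dot w w by rewrite /qform mulmx1.
set A := [set w : 'rV[R]_m.+1 | dot w w = 1].
have A0 : A !=set0 by exists (delta_mx 0 0); rewrite /A /= dot_delta.
have A_closed : closed A.
  rewrite (_ : A = qform 1%:M @^-1` [set 1]); last by apply/seteqP; split => w /=; rewrite qform1.
  by apply: preimage_closed => [w _|]; [exact: qform_continuous|exact: closed_eq].
have A_bounded : bounded_set A.
  exists 1; split; first by rewrite num_real.
  move=> x x_gt1 w Aw; rewrite /Num.norm /= mx_normrE.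
  apply: bigmax_le => [|[i j] _ /=]; first exact: le_trans (ltW x_gt1).
  rewrite ord1 (le_trans _ (ltW x_gt1)) // -(ler_pXn2r (n := 2)) ?nnegrE //.
  rewrite expr1n real_normK ?num_real //.
  move: Aw; rewrite /A /= dotE (bigD1 j) //= expr2 => <-.
  by rewrite lerDl sumr_ge0 // => k _; rewrite -expr2 sqr_ge0.
have [v Av v_max] := EVT_max_rV A0 (bounded_closed_compact A_bounded A_closed)
  (continuous_subspaceT (@qform_continuous m.+1 S)).
by exists v; split => [|z Az]; [move: Av|apply: v_max]; rewrite inE.
Qed.

Definition orth_decomp n (M : 'M[R]_n) (s : 'rV[R]_n) : Prop :=
  exists U V : 'M[R]_n, U *m U^T = 1%:M /\ V *m V^T = 1%:M /\ M = U *m diag_mx s *m V^T.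

Definition sorted_nonneg n (s : 'rV[R]_n) : Prop :=
  (forall i, 0 <= s 0 i) /\ (forall i j : 'I_n, (i <= j)%N -> s 0 j <= s 0 i).

Lemma orth_mul n (A B : 'M[R]_n) :
  A *m A^T = 1%:M -> B *m B^T = 1%:M -> (A *m B) *m (A *m B)^T = 1%:M.
Proof. by move=> A_orth B_orth; rewrite trmx_mul mulmxA -(mulmxA A) B_orth mulmx1. Qed.

Lemma orth_decomp_conj n (M P Q : 'M[R]_n) s :
  P *m P^T = 1%:M -> Q *m Q^T = 1%:M -> orth_decomp M s -> orth_decomp (P *m M *m Q^T) s.
Proof.
move=> P_orth Q_orth [U [V [U_orth [V_orth ->]]]].
exists (P *m U), (Q *m V); rewrite !orth_mul //; split=> //; split=> //.
by rewrite trmx_mul !mulmxA.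
Qed.

Lemma orth_block n (W : 'M[R]_n) : W *m W^T = 1%:M ->
  let B : 'M[R]_(1 + n) := block_mx 1%:M 0 0 W in B *m B^T = 1%:M.
Proof.
move=> W_orth /=; rewrite tr_block_mx !trmx0 trmx1 mulmx_block W_orth.
by rewrite !mulmx0 !mul0mx !addr0 !add0r mulmx1 -scalar_mx_block.
Qed.

Lemma orth_decomp_block n a (B : 'M[R]_n) s : orth_decomp B s ->
  orth_decomp (block_mx a%:M 0 0 B : 'M[R]_(1 + n)) (row_mx a%:M s).
Proof.
move=> [U [V [U_orth [V_orth ->]]]].
exists (block_mx 1%:M 0 0 U), (block_mx 1%:M 0 0 V); rewrite !orth_block //.
split=> //; split=> //; rewrite diag_mx_row (@tr_block_mx _ 1 n 1 n) !trmx0 trmx1.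
rewrite !(@mulmx_block _ 1 n 1 n 1 n) !mulmx0 !mul0mx !addr0 !add0r !mulmx1 !mul1mx.
by rewrite mul0mx; congr block_mx; apply/matrixP => i j; rewrite !mxE !ord1.
Qed.

Lemma orth_decomp_attained n (M : 'M[R]_n) s : orth_decomp M s ->
  forall k, exists z, dot z z = 1 /\ qform (M^T *m M) z = s 0 k ^+ 2.
Proof.
move=> [U [V [U_orth [V_orth ->]]]] k; exists ('e_k *m V^T).
have VtV : V^T *m V = 1%:M := mulmx1C V_orth.
have UtU : U^T *m U = 1%:M := mulmx1C U_orth.
split; first by rewrite dot_orth ?trmxK // dot_delta.
rewrite qform_gram !trmx_mul tr_diag_mx trmxK !mulmxA -(mulmxA _ V^T) VtV mulmx1.
have -> : 'e_k *m diag_mx s = s 0 k *: ('e_k : 'rV[R]_n).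
  apply/rowP => j; rewrite mul_mx_diag !mxE eqxx /=.
  by case: eqP => [->|]; rewrite ?mulr0 ?mul0r // mulrC.
by rewrite -scalemxAl dotZl dotZr dot_orth ?trmxK // dot_delta mulr1 expr2.
Qed.

Lemma sorted_nonneg_cons n a (s : 'rV[R]_n) : 0 <= a -> (forall k, s 0 k <= a) ->
  sorted_nonneg s -> sorted_nonneg (row_mx a%:M s : 'rV[R]_(1 + n)).
Proof.
move=> a_ge0 s_le [s_ge0 s_sorted]; split=> [i|i j].
  by rewrite mxE; case: splitP => [i' _|i' _]; rewrite ?mxE ?ord1 ?mulr1n.
rewrite !mxE; case: splitP => [j' ->|j' ->]; case: splitP => [i' ->|i' ->].
- by rewrite !mxE !ord1.
- by rewrite ord1 /= ltnNge leq_addr.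
- by rewrite mxE ord1 mulr1n.
- by rewrite leq_add2l; apply: s_sorted.
Qed.

Lemma block_of_first_row_col n a (B : 'M[R]_(1 + n)) :
  e0 n *m B = a *: e0 n -> B *m (e0 n)^T = a *: (e0 n)^T ->
  B = block_mx a%:M 0 0 (drsubmx B).
Proof.
rewrite /e0 trmx_delta -rowE -colE => rowB colB.
have B0j j : B 0 j = a * (j == 0)%:R.
  by have := congr1 (fun v : 'rV_(1 + n) => v 0 j) rowB; rewrite !mxE eqxx.
have Bi0 i : B i 0 = a * (i == 0)%:R.
  by have := congr1 (fun v : 'cV_(1 + n) => v i 0) colB; rewrite !mxE eqxx andbT.
have lshift0 : lshift n (0 : 'I_1) = 0 by apply/val_inj.
rewrite -[LHS](@submxK _ 1 n 1 n B); congr block_mx; apply/matrixP => i j.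
- by rewrite !mxE !ord1 lshift0 B0j !eqxx !mulr1n mulr1.
- by rewrite !mxE ord1 lshift0 B0j mulr0.
- by rewrite !mxE ord1 lshift0 Bi0 mulr0.
Qed.

Lemma mx_eq0_gram n p (M : 'M[R]_(p, n)) :
  (forall z, qform (M^T *m M) z <= 0) -> M = 0.
Proof.
move=> qform_le0; apply: trmx_inj; rewrite trmx0; apply/row_matrixP => i.
rewrite rowE row0; apply/eqP; rewrite -dot_eq0 eq_le dot_ge0 andbT.
by rewrite -qform_gram.
Qed.

Lemma is_singvals0 n : is_singvals (0 : 'M[R]_n) 0.
Proof.
split=> [i|]; first by rewrite mxE.
split=> [i j _|]; first by rewrite !mxE.
exists 1%:M, 1%:M; rewrite trmx1 mulmx1; do 2!split=> //.
by rewrite mul1mx (_ : diag_mx 0 = 0) ?mul0mx //; apply/matrixP => i j; rewrite !mxE mul0rn.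
Qed.

(* One step of the SVD: the largest singular value sigma = max |z M^T| over
   unit z is split off by two Householder reflections P, Q making Q M P block
   diagonal with blocks sigma and B'; the rest comes from an SVD of B'. *)
Lemma svd_step n (M : 'M[R]_(1 + n)) :
  (forall B : 'M[R]_n, exists s, is_singvals B s) -> exists s, is_singvals M s.
Proof.
move=> svd_n; set S := M^T *m M.
have S_sym : S^T = S by rewrite /S trmx_mul trmxK.
have [v [v1 v_max]] := qform_max_exists S.
have le_max := qform_le_max v_max; set l := qform S v in le_max *.
have [l0|l_neq0] := eqVneq l 0.
  have -> : M = 0 by apply: mx_eq0_gram => z; rewrite (le_trans (le_max z)) // l0 mul0r.
  by exists 0; apply: is_singvals0.
have l_gt0 : 0 < l by rewrite lt_def l_neq0 /l qform_gram dot_ge0.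
set sigma := Num.sqrt l; have sigma_gt0 : 0 < sigma by rewrite sqrtr_gt0.
have sigma2 : sigma ^+ 2 = l by rewrite sqr_sqrtr // ltW.
set u := sigma^-1 *: (v *m M^T).
have vMt : v *m M^T = sigma *: u by rewrite /u scalerA mulfV ?gt_eqF // scale1r.
have uM : u *m M = sigma *: v.
  rewrite /u -scalemxAl -mulmxA -/S (max_eigenvector v_max S_sym v1) -/l -sigma2.
  by rewrite scalerA expr2 mulKf // gt_eqF.
have [rowB colB] := householder_deflation v1 (lt0r_neq0 sigma_gt0) vMt uM.
set P := householder v in rowB colB *; set Q := householder u in rowB colB *.
set B : 'M[R]_(1 + n) := Q *m M *m P in rowB colB *.
have P_orth : P *m P^T = 1%:M := householder_orth v.
have Q_orth : Q *m Q^T = 1%:M := householder_orth u.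
have Q_sym : Q^T = Q := householder_sym u.
have MB : M = Q *m B *m P^T.
  by rewrite /B !mulmxA -{2}Q_sym Q_orth mul1mx -mulmxA P_orth mulmx1.
have [s' [s'_ge0 [s'_sorted B'dec]]] := svd_n (drsubmx B).
set s := row_mx sigma%:M s'.
have Mdec : orth_decomp M s.
  rewrite MB (block_of_first_row_col rowB colB).
  by apply: orth_decomp_conj => //; apply: orth_decomp_block.
have s'_le k : s' 0 k <= sigma.
  have [z [z1 qz]] := orth_decomp_attained Mdec (rshift 1 k).
  have : s 0 (rshift 1 k) ^+ 2 <= sigma ^+ 2 by rewrite -qz sigma2 -[l]mulr1 -z1 le_max.
  by rewrite row_mxEr ler_pXn2r ?nnegrE // ltW.
have [s_ge0 s_sorted] := sorted_nonneg_cons (ltW sigma_gt0) s'_le (conj s'_ge0 s'_sorted).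
by exists s.
Qed.

Theorem svd_exists n (M : 'M[R]_n) : exists s, is_singvals M s.
Proof.
elim: n M => [|n IHn] M; last exact: svd_step.
by exists 0; rewrite thinmx0; apply: is_singvals0.
Qed.

End SingularValueDecomposition.

Section SchattenViaTraces.
Variable R : realType.

Lemma diag_mx_exp n (d : 'rV[R]_n) k : diag_mx d ^+ k = diag_mx (\row_j d 0 j ^+ k).
Proof.
elim: k => [|k IHk]; first by apply/matrixP => i j; rewrite expr0 !mxE expr0.
rewrite exprS IHk -mulmxE mulmx_diag; congr diag_mx; apply/rowP => j.
by rewrite !mxE exprS.
Qed.

Lemma orth_conj_exp n (V Z : 'M[R]_n) k : V *m V^T = 1%:M ->
  (V *m Z *m V^T) ^+ k = V *m Z ^+ k *m V^T.
Proof.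
move=> V_orth; have VtV : V^T *m V = 1%:M := mulmx1C V_orth.
elim: k => [|k IHk]; first by rewrite !expr0 mulmx1 V_orth.
rewrite exprS IHk -!mulmxE !mulmxA -(mulmxA _ V^T V) VtV mulmx1 exprS -mulmxE.
by rewrite !mulmxA.
Qed.

Lemma gram_trace_orth_decomp L n (M : 'M[R]_n) s : orth_decomp M s ->
  gram_trace L M = \sum_i s 0 i ^+ (2 ^ L.+1).
Proof.
move=> [U [V [U_orth [V_orth ->]]]]; have UtU : U^T *m U = 1%:M := mulmx1C U_orth.
rewrite /gram_trace !trmx_mul trmxK tr_diag_mx -!mulmxE.
have -> : V *m (diag_mx s *m U^T) *m (U *m diag_mx s *m V^T) =
          V *m (diag_mx s *m diag_mx s) *m V^T.
  by rewrite !mulmxA -(mulmxA _ U^T U) UtU mulmx1 -!mulmxA.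
rewrite orth_conj_exp // mxtrace_mulC mulmxA (mulmx1C V_orth) mul1mx.
rewrite mulmxE -expr2 -exprM -expnS.
by rewrite diag_mx_exp mxtrace_diag; apply: eq_bigr => i _; rewrite mxE.
Qed.

Lemma powR_iroot k (x : R) : 0 <= x -> powR x ((2 ^ k)%:R)^-1 = iroot k x.
Proof.
move=> x_ge0; elim: k => [|k IHk]; first by rewrite expn0 invr1 powRr1.
by rewrite irootS -IHk expnS natrM invfM mulrC powRrM powR12_sqrt // powR_ge0.
Qed.

Lemma schatten_trE L n (M : 'M[R]_n) : schatten (2 ^ L.+1)%:R M = schatten_tr L M.
Proof.
have [s0 svd_s0] := svd_exists M.
have [sv_ge0 [_ sv_dec]] : is_singvals M (singvals M) := xgetPex 0 (ex_intro _ s0 svd_s0).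
rewrite /schatten /schatten_tr -powR_iroot ?gram_trace_ge0 // (gram_trace_orth_decomp L sv_dec).
by congr powR; apply: eq_bigr => i _; rewrite powR_mulrn ?sv_ge0.
Qed.

End SchattenViaTraces.

Theorem mainTheorem5 (R : realType) (j n : nat) (hj : (1 <= j)%N) (M : 'M[R]_n) :
  schatten (2 ^ j)%:R (utrunc M) <= 2 ^+ (j - 1) * schatten (2 ^ j)%:R M.
Proof.
case: j hj => // L _; rewrite subn1 /= !schatten_trE.
have -> : utrunc M = band 0 M by apply/matrixP => i k; rewrite !mxE addn0.
exact: band_schatten_tr.
Qed.
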